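(* Let $\zeta\in\mathbb{R}$ satisfy either $0<\zeta<\min\left\{\gamma^A_{\min},\dfrac{\gamma^S_{\min}}{\gamma^A_{\max}+\gamma^S_{\min}}\right\}$ or $\zeta\ge\gamma^A_{\max}+\gamma^S_{\max}$. Then the symmetric matrix $Z(\zeta)=(1-\zeta)R(\zeta I-\tilde A)^{-1}R^T+\zeta I$ is well defined and is either positive definite or negative definite.
   Context: $A\in\mathbb{R}^{n\times n}$ is symmetric positive definite, $B\in\mathbb{R}^{m\times n}$ has full row rank. $\widehat A\in\mathbb{R}^{n\times n}$, $\widehat S\in\mathbb{R}^{m\times m}$ are symmetric positive definite; $\tilde A=\widehat A^{-1/2}A\widehat A^{-1/2}$, $R=\widehat S^{-1/2}B\widehat A^{-1/2}$, $\tilde S=B\widehat A^{-1}B^T$. $\gamma^A_{\min},\gamma^A_{\max}$ are the extreme eigenvalues of $\widehat A^{-1}A$, and $\gamma^S_{\min},\gamma^S_{\max}$ those of $\widehat S^{-1}\tilde S$. Standing assumption: $1\in[\gamma^A_{\min},\gamma^A_{\max}]$. *)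

From HB Require Import structures.
From mathcomp Require Import all_boot all_order all_algebra.
From mathcomp Require Export reals.
Export Order.TTheory GRing.Theory Num.Theory.

Set Implicit Arguments.
Unset Strict Implicit.
Unset Printing Implicit Defensive.

Local Open Scope ring_scope.

Definition symmx (R : realFieldType) (k : nat) (M : 'M[R]_k) : Prop := M^T = M.

Definition posdefmx (R : realFieldType) (k : nat) (M : 'M[R]_k) : Prop :=
  forall x : 'cV[R]_k, x != 0 -> 0 < (x^T *m M *m x) 0 0.
Definition negdefmx (R : realFieldType) (k : nat) (M : 'M[R]_k) : Prop :=
  forall x : 'cV[R]_k, x != 0 -> (x^T *m M *m x) 0 0 < 0.

Definition spdmx (R : realFieldType) (k : nat) (M : 'M[R]_k) : Prop :=
  symmx M /\ posdefmx M.

Definition extreme_eigs (R : realFieldType) (k : nat) (M : 'M[R]_k)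
  (gmin gmax : R) : Prop :=
  [/\ eigenvalue M gmin, eigenvalue M gmax &
      forall g, eigenvalue M g -> gmin <= g <= gmax].

Definition is_inv_sqrt (R : realFieldType) (k : nat) (M X : 'M[R]_k) : Prop :=
  spdmx X /\ X *m X = invmx M.

From HB Require Import structures.
From mathcomp Require Import all_boot all_order all_algebra reals.
From mathcomp Require Import sesquilinear spectral complex.
From mathcomp Require Import ring lra.
Import Order.TTheory GRing.Theory Num.Theory Num.Def.

(* The congruence by Ahat^{-1/2} turns Ahat^{-1} A into the symmetric At
   with the same spectrum in [gAmin, gAmax], and Rm Rm^T is similar to
   Shat^{-1} B Ahat^{-1} B^T, so its spectrum lies in [gSmin, gSmax], with
   gSmin > 0 because Rm has full row rank.  When zeta lies outside
   [gAmin, gAmax], zeta - At is invertible and every eigenvalue of its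
   inverse is at most 1 / (zeta - gAmax).  Bounding the two Rayleigh
   quotients in
     x^T Z x = (1 - zeta) (Rm^T x)^T (zeta - At)^{-1} (Rm^T x) + zeta |x|^2
   gives x^T Z x <= kappa |x|^2 (resp. >=) with
   kappa = (1 - zeta) gS / (zeta - gAmax) + zeta, gS = gSmin (resp. gSmax),
   and the two ranges of zeta are exactly those making kappa < 0 (resp. > 0). *)

Set Implicit Arguments.
Unset Strict Implicit.
Unset Printing Implicit Defensive.

Local Open Scope ring_scope.

Section Eigenvalues.
Variables (F : fieldType) (n : nat).
Implicit Types (M Y : 'M[F]_n) (a g : F).

Lemma eigenvalue_mulmxC Y M g :
  Y \in unitmx -> eigenvalue (Y *m M) g = eigenvalue (M *m Y) g.
Proof.
move=> Yu; apply/eigenvalueP/eigenvalueP => -[v vE v0].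
  exists (v *m Y); first by rewrite mulmxA -(mulmxA v) vE -scalemxAl.
  by rewrite mulmx_free_eq0 ?row_free_unit.
exists (v *m invmx Y).
  by rewrite mulmxA mulmxKV // -(mulmxK Yu (v *m M)) -(mulmxA v) vE -scalemxAl.
by rewrite mulmx_free_eq0 ?row_free_unit ?unitmx_inv.
Qed.

Lemma eigenvalue_subr_scalar M a g :
  eigenvalue (M - a%:M) g = eigenvalue M (g + a).
Proof. by rewrite /eigenvalue /eigenspace /= raddfD opprD addrA addrAC. Qed.

Lemma eigenvalue_scalar_subr M a g :
  eigenvalue (a%:M - M) g = eigenvalue M (a - g).
Proof.
apply/eigenvalueP/eigenvalueP => -[v vE v0]; exists v => //.
  move: vE; rewrite mulmxBr mul_mx_scalar scalerBl => <-.
  by rewrite opprB addrC subrK.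
by rewrite mulmxBr mul_mx_scalar vE scalerBl opprB addrC subrK.
Qed.

Lemma scalar_subr_unitmx M a : ~~ eigenvalue M a -> a%:M - M \in unitmx.
Proof.
rewrite -row_free_unit -kermx_eq0.
apply: contraR => /rowV0Pn[v /sub_kermxP vK v0].
apply/eigenvalueP; exists v => //.
by apply/eqP; rewrite -subr_eq0 -mul_mx_scalar -mulmxBr -opprB mulmxN vK oppr0.
Qed.

Lemma eigenvalue_invmx M g :
  M \in unitmx -> eigenvalue (invmx M) g -> eigenvalue M g^-1.
Proof.
move=> Mu /eigenvalueP[v vE v0]; apply/eigenvalueP; exists v => //.
have vgvM : v = g *: (v *m M) by rewrite -{1}(mulmxKV Mu v) vE scalemxAl.
have g0 : g != 0 by apply: contraNneq v0 => g0; rewrite vgvM g0 scale0r.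
by rewrite {2}vgvM scalerA mulVf ?scale1r.
Qed.

End Eigenvalues.

Lemma unitmx_sqrt_invmx (R : comUnitRingType) n (M X : 'M[R]_n) :
  M \in unitmx -> X *m X = invmx M -> X \in unitmx.
Proof.
move=> Mu XX; have : X *m X \in unitmx by rewrite XX unitmx_inv.
by rewrite unitmx_mul => /andP[].
Qed.

Section RealField.
Variable R : realFieldType.

Lemma mulmx_row_trmx_gt0 n (u : 'rV[R]_n) : u != 0 -> 0 < (u *m u^T) 0 0.
Proof.
move=> u0; have [j uj0] : exists j, u 0 j != 0.
  apply/existsP; apply: contraNT u0 => /existsPn uj0.
  by apply/eqP/rowP => j; rewrite mxE; apply/eqP/negbNE.
rewrite mxE (bigD1 j) //= ltr_wpDr ?sumr_ge0 // => [i _|]; rewrite mxE.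
  by rewrite -expr2 sqr_ge0.
by rewrite lt_def mulf_neq0 // -expr2 sqr_ge0.
Qed.

Lemma mulmx_trmx_col_gt0 n (x : 'cV[R]_n) : x != 0 -> 0 < (x^T *m x) 0 0.
Proof. by rewrite -trmx_eq0 => /mulmx_row_trmx_gt0; rewrite trmxK. Qed.

Lemma posdefmx_unit n (M : 'M[R]_n) : posdefmx M -> M \in unitmx.
Proof.
move=> Mpd; rewrite -row_free_unit -kermx_eq0; apply: contraT.
move=> /rowV0Pn[v /sub_kermxP vM0 v0].
by have := Mpd v^T; rewrite trmx_eq0 trmxK vM0 mul0mx mxE ltxx => /(_ v0).
Qed.

Lemma eigenvalue_mulmx_trmx_gt0 m n (M : 'M[R]_(m, n)) g :
  row_free M -> eigenvalue (M *m M^T) g -> 0 < g.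
Proof.
move=> Mfree /eigenvalueP[v vE v0].
have vM0 : v *m M != 0 by rewrite mulmx_free_eq0.
have := mulmx_row_trmx_gt0 vM0.
rewrite trmx_mul mulmxA -(mulmxA v) vE -scalemxAl mxE.
by rewrite pmulr_lgt0 // mulmx_row_trmx_gt0.
Qed.

Lemma posdefmx_of_ge k (M : 'M[R]_k) c : 0 < c ->
  (forall x : 'cV_k, c * (x^T *m x) 0 0 <= (x^T *m M *m x) 0 0) -> posdefmx M.
Proof.
move=> c0 Mge x x0; apply: lt_le_trans (Mge x).
by rewrite mulr_gt0 // mulmx_trmx_col_gt0.
Qed.

Lemma negdefmx_of_le k (M : 'M[R]_k) c : c < 0 ->
  (forall x : 'cV_k, (x^T *m M *m x) 0 0 <= c * (x^T *m x) 0 0) -> negdefmx M.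
Proof.
move=> c0 Mle x x0; apply: (le_lt_trans (Mle x)).
by rewrite nmulr_rlt0 // mulmx_trmx_col_gt0.
Qed.

Lemma eigenvalue_invmx_scalar_subr_le n (M : 'M[R]_n) a b z :
  (forall g, eigenvalue M g -> a <= g <= b) -> z < a \/ b < z ->
  forall mu, eigenvalue (invmx (z%:M - M)) mu -> mu <= (z - b)^-1.
Proof.
move=> Mab z_out mu.
have zMu : z%:M - M \in unitmx.
  by apply: scalar_subr_unitmx; apply/negP => /Mab; case: z_out; lra.
(* mu = 1 / (z - g) for an eigenvalue g of M, and 1 / (z - _) is increasing
   on each side of z. *)
move=> /(eigenvalue_invmx zMu); rewrite eigenvalue_scalar_subr.
move=> /Mab /andP[ah hb]; rewrite -(invrK mu); move: mu^-1 ah hb => h ah hb.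
case: z_out => z_out; [rewrite lef_nV2 | rewrite lef_pV2];
  by rewrite ?negrE ?posrE; lra.
Qed.

End RealField.

Lemma eigenvalue_spectral_diag (C : numClosedFieldType) n (A : 'M[C]_n) j :
  A \is normalmx -> eigenvalue A (spectral_diag A 0 j).
Proof.
move=> /orthomx_spectralP; set P := spectralmx A => AE.
apply/eigenvalueP; exists (row j P).
  have PA : P *m A = diag_mx (spectral_diag A) *m P.
    by rewrite [in LHS]AE !mulmxA mulmxV ?mul1mx // spectral_unit.
  by rewrite -row_mul PA row_mul row_diag_mx -scalemxAl -rowE.
apply/eqP => Pj0; have /unitarymxP/(congr1 (row j)) := spectral_unitarymx A.
rewrite row_mul Pj0 mul0mx => /rowP/(_ j).
by rewrite !mxE eqxx => /eqP; rewrite eq_sym oner_eq0.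
Qed.

Section RealSymmetric.
Variables (R : rcfType) (n : nat) (S : 'M[R]_n).
Hypothesis Ssym : S^T = S.

(* The spectral theorem applies to normal matrices over an algebraically
   closed field, so S is diagonalized as a Hermitian matrix over R[i]. *)
Let Sc := map_mx (real_complex R) S.

Lemma hermsym_complexify : Sc \is hermsymmx.
Proof.
apply: realsym_hermsym.
  apply/is_hermitianmxP; rewrite expr0 scale1r.
  by apply/matrixP => i j; rewrite !mxE -[in LHS]Ssym mxE.
by apply/mxOverP => i j; rewrite mxE /= complex_real.
Qed.

Lemma spectral_diag_complexify j :
  spectral_diag Sc 0 j = (complex.Re (spectral_diag Sc 0 j))%:C%C /\
  eigenvalue S (complex.Re (spectral_diag Sc 0 j)).
Proof.
have dj_real := mxOverP (hermitian_spectral_diag_real hermsym_complexify) 0 j.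
rewrite RRe_real //; split => //.
rewrite -(eigenvalue_map (real_complex R)) /= RRe_real //.
exact/eigenvalue_spectral_diag/hermitian_normalmx/hermsym_complexify.
Qed.

Lemma quadform_ge0 : (forall g, eigenvalue S g -> 0 <= g) ->
  forall x : 'cV_n, 0 <= (x^T *m S *m x) 0 0.
Proof.
move=> Sge0 x; rewrite -ler0c.
set xc := map_mx (real_complex R) x.
have -> : ((x^T *m S *m x) 0 0)%:C%C = (xc^T *m Sc *m xc) 0 0.
  by rewrite map_trmx -!map_mxM [RHS]mxE.
have xcT : map_mx conjC xc^T = xc^T.
  by apply/matrixP => i j; rewrite !mxE conj_Creal //= complex_real.
have /orthomx_spectralP -> := hermitian_normalmx hermsym_complexify.
rewrite invmx_unitary ?spectral_unitarymx // !mulmxA.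
have -> : xc^T *m map_mx conjC (spectralmx Sc)^T =
           map_mx conjC (spectralmx Sc *m xc)^T.
  by rewrite trmx_mul map_mxM xcT map_trmx.
rewrite -mulmxA mul_mx_diag mxE; apply: sumr_ge0 => j _; rewrite !mxE.
have [-> /Sge0 dge0] := spectral_diag_complexify j.
by rewrite mulrAC mulr_ge0 ?ler0c // mulrC mul_conjC_ge0.
Qed.

End RealSymmetric.

Lemma quadform_ge (R : rcfType) n (S : 'M[R]_n) lo : S^T = S ->
  (forall g, eigenvalue S g -> lo <= g) ->
  forall x : 'cV_n, lo * (x^T *m x) 0 0 <= (x^T *m S *m x) 0 0.
Proof.
move=> Ssym Sge x; have := quadform_ge0 (S := S - lo%:M) _ _ x.
rewrite mulmxBr mulmxBl mul_mx_scalar -scalemxAl !mxE subr_ge0; apply.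
  by rewrite raddfB /= tr_scalar_mx Ssym.
by move=> g; rewrite eigenvalue_subr_scalar => /Sge; rewrite lerDr.
Qed.

Lemma quadform_le (R : rcfType) n (S : 'M[R]_n) hi : S^T = S ->
  (forall g, eigenvalue S g -> g <= hi) ->
  forall x : 'cV_n, (x^T *m S *m x) 0 0 <= hi * (x^T *m x) 0 0.
Proof.
move=> Ssym Sle x; have := quadform_ge0 (S := hi%:M - S) _ _ x.
rewrite mulmxBr mulmxBl mul_mx_scalar -scalemxAl !mxE subr_ge0; apply.
  by rewrite raddfB /= tr_scalar_mx Ssym.
by move=> g; rewrite eigenvalue_scalar_subr => /Sle; rewrite lerBlDr lerDl.
Qed.

Section ZetaMatrix.
Variables (R : rcfType) (n m : nat) (At : 'M[R]_n) (Rm : 'M[R]_(m, n)).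
Variables (a b c d zeta : R).
Hypothesis At_sym : At^T = At.
Hypothesis At_spec : forall g, eigenvalue At g -> a <= g <= b.
Hypothesis RR_spec : forall g, eigenvalue (Rm *m Rm^T) g -> c <= g <= d.

Let K := invmx (zeta%:M - At).
Let Z := (1 - zeta) *: (Rm *m K *m Rm^T) + zeta%:M.

Let K_sym : K^T = K.
Proof. by rewrite /K trmx_inv raddfB /= tr_scalar_mx At_sym. Qed.

Lemma Zmx_sym : Z^T = Z.
Proof.
by rewrite /Z raddfD /= tr_scalar_mx linearZ /= !trmx_mul trmxK K_sym mulmxA.
Qed.

Lemma Zmx_quadform (x : 'cV_m) : (x^T *m Z *m x) 0 0 =
  (1 - zeta) * ((Rm^T *m x)^T *m K *m (Rm^T *m x)) 0 0 + zeta * (x^T *m x) 0 0.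
Proof.
rewrite /Z mulmxDr mulmxDl mul_mx_scalar -scalemxAl -scalemxAr -scalemxAl.
by rewrite trmx_mul trmxK !mulmxA !mxE.
Qed.

Lemma K_quadform_le : zeta < a \/ b < zeta -> forall x : 'cV_m,
  ((Rm^T *m x)^T *m K *m (Rm^T *m x)) 0 0
    <= (zeta - b)^-1 * (x^T *m (Rm *m Rm^T) *m x) 0 0.
Proof.
move=> z_out x.
have := quadform_le K_sym (eigenvalue_invmx_scalar_subr_le At_spec z_out).
move=> /(_ (Rm^T *m x)).
by rewrite trmx_mul trmxK !mulmxA.
Qed.

Let RR_sym : (Rm *m Rm^T)^T = Rm *m Rm^T.
Proof. by rewrite trmx_mul trmxK. Qed.

Let RR_ge g : eigenvalue (Rm *m Rm^T) g -> c <= g.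
Proof. by case/RR_spec/andP. Qed.

Let RR_le g : eigenvalue (Rm *m Rm^T) g -> g <= d.
Proof. by case/RR_spec/andP. Qed.

Lemma Zmx_negdef : 0 < c -> a <= 1 <= b ->
  0 < zeta < Num.min a (c / (b + c)) -> negdefmx Z.
Proof.
move=> c0 /andP[a1 b1]; rewrite lt_min => /andP[z0 /andP[za]].
have bc0 : 0 < b + c by lra.
rewrite ltr_pdivlMr // => zbc.
have zb : zeta - b < 0 by lra.
set hi := (zeta - b)^-1; have hi0 : hi < 0 by rewrite invr_lt0.
set kappa := (1 - zeta) * hi * c + zeta.
have kappa0 : kappa < 0.
  have : 0 < kappa * (zeta - b).
    (* this is c - zeta (b + c) + zeta^2 > 0 *)
    have -> : kappa * (zeta - b) = (1 - zeta) * c + zeta * (zeta - b).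
      by rewrite /kappa /hi; field; rewrite lt_eqF.
    nra.
  by rewrite nmulr_lgt0.
apply: (negdefmx_of_le kappa0) => x; rewrite Zmx_quadform.
have Kx := K_quadform_le (or_introl za) x; rewrite -/hi in Kx.
have z1 : 0 <= 1 - zeta by lra.
have RRx := quadform_ge RR_sym RR_ge x.
have := ler_wpM2l z1 Kx; have := ler_wpM2l z1 (ler_wnM2l (ltW hi0) RRx).
rewrite /kappa; lra.
Qed.

Lemma Zmx_posdef : 0 < d -> 1 <= b -> b + d <= zeta -> posdefmx Z.
Proof.
move=> d0 b1 bdz; have bz : b < zeta by lra.
have zb : 0 < zeta - b by rewrite subr_gt0.
set hi := (zeta - b)^-1; have hi0 : 0 < hi by rewrite invr_gt0.
set kappa := (1 - zeta) * hi * d + zeta.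
have kappa0 : 0 < kappa.
  have : 0 < kappa * (zeta - b).
    have -> : kappa * (zeta - b) = (1 - zeta) * d + zeta * (zeta - b).
      by rewrite /kappa /hi; field; rewrite gt_eqF.
    nra.
  by rewrite pmulr_lgt0.
apply: (posdefmx_of_ge kappa0) => x; rewrite Zmx_quadform.
have Kx := K_quadform_le (or_intror bz) x; rewrite -/hi in Kx.
have z1 : 1 - zeta <= 0 by lra.
have RRx := quadform_le RR_sym RR_le x.
have := ler_wnM2l z1 Kx; have := ler_wnM2l z1 (ler_wpM2l (ltW hi0) RRx).
rewrite /kappa; lra.
Qed.

End ZetaMatrix.

Theorem lemma4 (R : realType) (n m : nat)
  (A Ahat : 'M[R]_n) (B : 'M[R]_(m, n)) (Shat : 'M[R]_m)
  (Ahat_isqrt : 'M[R]_n) (Shat_isqrt : 'M[R]_m)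
  (gAmin gAmax gSmin gSmax zeta : R) :
  spdmx A -> \rank B = m -> spdmx Ahat -> spdmx Shat ->
  is_inv_sqrt Ahat Ahat_isqrt -> is_inv_sqrt Shat Shat_isqrt ->
  extreme_eigs (invmx Ahat *m A) gAmin gAmax ->
  extreme_eigs (invmx Shat *m (B *m invmx Ahat *m B^T)) gSmin gSmax ->
  gAmin <= 1 <= gAmax ->
  (0 < zeta < Num.min gAmin (gSmin / (gAmax + gSmin))) \/ gAmax + gSmax <= zeta ->
  let At := Ahat_isqrt *m A *m Ahat_isqrt in
  let Rm := Shat_isqrt *m B *m Ahat_isqrt in
  (zeta%:M - At) \in unitmx /\
  (let Z := (1 - zeta) *: (Rm *m invmx (zeta%:M - At) *m Rm^T) + zeta%:M in
   symmx Z /\ (posdefmx Z \/ negdefmx Z)).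
Proof.
move=> [Asym _] rkB [_ Ahpd] [_ Shpd] [[Xsym _] XX] [[Ysym _] YY].
move=> [_ _ eAb] [eSmin _ eSb] gA1 hz At Rm.
set X := Ahat_isqrt in XX Xsym At Rm *; set Y := Shat_isqrt in YY Ysym Rm *.
have Xu := unitmx_sqrt_invmx (posdefmx_unit Ahpd) XX.
have Yu := unitmx_sqrt_invmx (posdefmx_unit Shpd) YY.
have At_sym : At^T = At by rewrite !trmx_mul Xsym Asym mulmxA.
have At_spec g : eigenvalue At g -> gAmin <= g <= gAmax.
  by rewrite /At -(eigenvalue_mulmxC _ _ Xu) mulmxA XX => /eAb.
have RR_eigenvalue g :
  eigenvalue (Rm *m Rm^T) g =
  eigenvalue (invmx Shat *m (B *m invmx Ahat *m B^T)) g.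
  rewrite !trmx_mul Xsym Ysym -XX -YY !mulmxA.
  by rewrite -(eigenvalue_mulmxC _ _ Yu) !mulmxA.
have Rm_free : row_free Rm.
  apply/inj_row_free => v /eqP.
  rewrite !mulmxA !mulmx_free_eq0 ?row_free_unit //.
    by move/eqP.
  by rewrite /row_free rkB.
have gSmin_gt0 : 0 < gSmin.
  by apply: (eigenvalue_mulmx_trmx_gt0 Rm_free); rewrite RR_eigenvalue.
have RR_bound g : eigenvalue (Rm *m Rm^T) g -> gSmin <= g <= gSmax.
  by rewrite RR_eigenvalue => /eSb.
have gSmax_gt0 : 0 < gSmax by case/andP: (eSb _ eSmin) => _; apply: lt_le_trans.
have z_out : zeta < gAmin \/ gAmax < zeta.
  by case: hz => [/andP[_]|]; rewrite ?lt_min; [case/andP|]; lra.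
split.
  by apply: scalar_subr_unitmx; apply/negP => /At_spec/andP[]; lra.
move=> Z; split; first exact: (Zmx_sym Rm zeta At_sym).
case: hz => hz; [right | left].
  exact: (Zmx_negdef At_sym At_spec RR_bound gSmin_gt0 gA1 hz).
by apply: (Zmx_posdef At_sym At_spec RR_bound gSmax_gt0 _ hz); case/andP: gA1.
Qed.
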